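(* Let $d\ge3$, $h\ge1$, $1\le n\le h$, and let $j$ be a vertex at distance $n$ from the root. Then the order of the image of $\bar{\mathbf{x}}_j$ in the quotient group $G(d,h)/G_{n-1}(d,h)$ is $\theta(d,h+2-n)$, where $\theta(d,m):=\frac{(d-1)^m-1}{d-2}$.
   Context: Let $\mathcal{T}(d,h)$ be the rooted tree in which the root $0$ has $d$ children, every vertex at distance $1,\dots,h-1$ from the root has $d-1$ children, and the vertices at distance $h$ are leaves. Let $V$ be its vertex set, $A$ its adjacency matrix, $\Delta := dI-A$, and $\Lambda\subset\mathbb{Z}^V$ the lattice spanned by the rows of $\Delta$. Then $G(d,h):=\mathbb{Z}^V/\Lambda$; $\{\mathbf{x}_i:i\in V\}$ is the standard basis of $\mathbb{Z}^V$ and $\bar{\mathbf{v}}$ denotes the image of $\mathbf{v}$ in $G(d,h)$. For $0\le m\le h$, $G_m(d,h)$ is the subgroup of $G(d,h)$ generated by $\{\bar{\mathbf{x}}_i : i \text{ at distance}\le m\text{ from the root}\}$. *)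

From mathcomp Require Import all_boot all_order all_algebra.
Set Implicit Arguments. Unset Strict Implicit. Unset Printing Implicit Defensive.
Import GRing.Theory Num.Theory.
Local Open Scope ring_scope.

(* Vertices of T(d,h): a vertex at distance k from the root 0 = [::] is the
   sequence [:: c_1; ...; c_k] of child indices along the path from the root,
   with c_1 < d and c_i < d-1 for i >= 2. *)
Definition nchildren (d : nat) (u : seq nat) : nat :=
  if u is [::] then d else d.-1.

Fixpoint level (d k : nat) : seq (seq nat) :=
  if k is k'.+1 then
    flatten [seq [seq rcons u c | c <- iota 0 (nchildren d u)] | u <- level d k']
  else [:: [::]].

Definition verts (d h : nat) : seq (seq nat) :=
  flatten [seq level d k | k <- iota 0 h.+1].

Definition depth (u : seq nat) : nat := size u.

Definition adj (u w : seq nat) : bool :=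
  ((size w == (size u).+1) && (take (size u) w == u)) ||
  ((size u == (size w).+1) && (take (size w) u == w)).

Definition Delta (d : nat) (i w : seq nat) : int :=
  (d%:Z * (i == w)%:Z - (adj i w)%:Z)%R.

(* Elements of Z^V are represented as functions seq nat -> int, only their
   values on V matter.  [inLm d h m v] : v lies in Lambda + span_Z {x_i : depth i <= m},
   i.e. the image of v in G(d,h) lies in G_m(d,h). *)
Definition inLm (d h m : nat) (v : seq nat -> int) : Prop :=
  exists (c e : seq nat -> int),
    forall w, w \in verts d h ->
      v w = \sum_(i <- verts d h) c i * Delta d i w
            + \sum_(i <- verts d h | (depth i <= m)%N) e i * (i == w)%:Z.

Definition xscaled (k : nat) (j : seq nat) : seq nat -> int :=
  fun w => (k%:Z * (w == j)%:Z)%R.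

Definition quot_order (d h n : nat) (j : seq nat) (k : nat) : Prop :=
  (0 < k)%N /\ inLm d h n.-1 (xscaled k j) /\
  (forall k', (0 < k' < k)%N -> ~ inLm d h n.-1 (xscaled k' j)).

(* theta(d,m) = ((d-1)^m - 1)/(d-2), an exact division for d >= 3 *)
Definition theta (d m : nat) : nat := (((d.-1) ^ m).-1 %/ (d - 2))%N.

From mathcomp Require Import all_boot all_order all_algebra.
From mathcomp Require Import zify ring.
Set Implicit Arguments. Unset Strict Implicit. Unset Printing Implicit Defensive.
Import GRing.Theory Num.Theory.

(* A weight psi : V -> Z vanishing up to depth n-1 pairs to zero with G_{n-1}, and
   pairs with the row of Delta at i to (Delta psi)(i); so if N divides every
   (Delta psi)(i), then N divides the pairing of psi with any vector of
   Lambda + G_{n-1}.  We use psi(w) = g(w_n) s(w), where w_n is the ancestor of w at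
   depth n and s(w) = theta(d, h+1-|w|) is the number of vertices of the subtree
   rooted at w.  As d s(w) = s(parent w) + (d-1) s(child), Delta psi vanishes off
   depths n and n-1, where it equals theta(d,h+2-n) g and -theta(d,h+1-n) times the
   sum of g over the children.  For g the indicator of j this exhibits
   theta(d,h+2-n) x_j in Lambda + G_{n-1}.  For g(w) = [last index of w_n is that of j]
   - [it is some other fixed index] the sums over children cancel, so
   theta(d,h+2-n) divides k theta(d,h+1-n) whenever k x_j lies in Lambda + G_{n-1};
   since theta(d,h+2-n) = 1 + (d-1) theta(d,h+1-n), it divides k. *)

Definition is_vertex (d : nat) (w : seq nat) : bool :=
  if w is c :: t then (c < d) && all (fun x => x < d.-1) t else true.

Lemma is_vertex_rcons d u c :
  is_vertex d (rcons u c) = is_vertex d u && (c < nchildren d u).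
Proof.
case: u => [|a t] /=; first by rewrite andbT.
by rewrite all_rcons; case: (a < d); case: (c < d.-1); case: (all _ t).
Qed.

Lemma mem_level d k w : (w \in level d k) = (size w == k) && is_vertex d w.
Proof.
elim: k w => [|k IH] w /=; first by rewrite inE; case: w.
apply/flatten_mapP/idP.
  case=> u; rewrite IH => /andP[/eqP su vu] /mapP[c].
  rewrite mem_iota add0n => /andP[_ lt_c] ->.
  by rewrite size_rcons su eqxx is_vertex_rcons vu lt_c.
case/lastP: w => [//|u c].
rewrite size_rcons eqSS is_vertex_rcons => /andP[su /andP[vu lt_c]].
exists u; first by rewrite IH su vu.
by apply/mapP; exists c; rewrite ?mem_iota.
Qed.

Lemma mem_verts d h w : (w \in verts d h) = (size w <= h) && is_vertex d w.
Proof.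
apply/flatten_mapP/idP.
  case=> k; rewrite mem_iota add0n ltnS mem_level => /andP[_ le_kh].
  by case/andP=> /eqP -> ->; rewrite le_kh.
case/andP=> le_wh vw; exists (size w); first by rewrite mem_iota add0n ltnS.
by rewrite mem_level eqxx.
Qed.

Lemma uniq_flatten_map (S T : eqType) (F : S -> seq T) (s : seq S) :
  uniq s -> (forall x, uniq (F x)) ->
  (forall x y z, z \in F x -> z \in F y -> x = y) ->
  uniq (flatten [seq F x | x <- s]).
Proof.
move=> us uF disjF; elim: s us => [|x s IH] //= /andP[xNs us].
rewrite cat_uniq uF IH // andbT.
apply/hasP => -[z /flatten_mapP[y ys zFy] zFx].
by move: xNs; rewrite (disjF _ _ _ zFx zFy) ys.
Qed.

Lemma uniq_level d k : uniq (level d k).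
Proof.
elim: k => [|k IH] //=; apply: uniq_flatten_map => //.
  by move=> u; rewrite map_inj_uniq ?iota_uniq // => a b /rcons_inj[].
by move=> x y z /mapP[a _ ->] /mapP[b _] /rcons_inj[].
Qed.

Lemma uniq_verts d h : uniq (verts d h).
Proof.
apply: uniq_flatten_map; [exact: iota_uniq | exact: uniq_level |].
by move=> x y z; rewrite !mem_level => /andP[/eqP <- _] /andP[/eqP <- _].
Qed.

Lemma eq_nchildren d u v : size u = size v -> nchildren d u = nchildren d v.
Proof. by case: u; case: v. Qed.

Definition is_child (i w : seq nat) : bool :=
  (size i == (size w).+1) && (take (size w) i == w).

Lemma is_child_rconsl u c w : is_child (rcons u c) w = (w == u).
Proof.
rewrite /is_child size_rcons eqSS.
have [<-|ne] := eqVneq (size u) (size w).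
  by rewrite -cats1 take_size_cat // eq_sym.
by apply/esym/eqP => E; move: ne; rewrite E eqxx.
Qed.

Lemma is_child_rcons i w : is_child i w -> i = rcons w (nth 0 i (size w)).
Proof.
case/andP=> /eqP si /eqP ti.
by rewrite -{1}ti -take_nth ?si // -si take_size.
Qed.

Local Open Scope ring_scope.

Lemma big_delta_seq (T : eqType) (s : seq T) x (F : T -> int) :
  uniq s -> x \in s -> \sum_(i <- s) F i * (i == x)%:Z = F x.
Proof.
move=> us xs; rewrite (eq_bigr (fun i => if i == x then F i else 0)); last first.
  by move=> i _; case: eqP; rewrite ?mulr1 ?mulr0.
by rewrite -big_mkcond -big_filter filter_pred1_uniq // big_seq1.
Qed.

Lemma Delta_sym d i w : Delta d i w = Delta d w i.
Proof. by rewrite /Delta /adj eq_sym orbC. Qed.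

Lemma DeltaE d i w :
  Delta d i w = d%:Z * (i == w)%:Z - (is_child w i)%:Z - (is_child i w)%:Z.
Proof.
rewrite /Delta -addrA -opprD; congr (_ - _).
have -> : adj i w = is_child w i || is_child i w by [].
case A: (is_child w i); case B: (is_child i w) => //.
by move: A B => /andP[/eqP A _] /andP[/eqP B _]; move: A; rewrite B; lia.
Qed.

Section Laplacian.
Variables (d h : nat).
Implicit Types (psi : seq nat -> int) (w : seq nat).

Definition lap psi w : int := \sum_(i <- verts d h) psi i * Delta d i w.

Lemma sum_parent psi w : w \in verts d h ->
  \sum_(i <- verts d h) psi i * (is_child w i)%:Z =
  if size w is 0 then 0 else psi (take (size w).-1 w).
Proof.
case/lastP: w => [|u c] wV.
  by rewrite big1 // => i _; rewrite mulr0.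
rewrite size_rcons /= -cats1 take_size_cat //.
under eq_bigr do rewrite cats1 is_child_rconsl.
rewrite big_delta_seq ?uniq_verts //.
move: wV; rewrite !mem_verts size_rcons is_vertex_rcons.
by case/andP=> /ltnW -> /andP[->].
Qed.

Lemma sum_children psi w : w \in verts d h ->
  \sum_(i <- verts d h) psi i * (is_child i w)%:Z =
  if (size w < h)%N then \sum_(c <- iota 0 (nchildren d w)) psi (rcons w c) else 0.
Proof.
move=> wV; rewrite (eq_bigr (fun i => if is_child i w then psi i else 0)); last first.
  by move=> i _; case: (is_child i w); rewrite ?mulr1 ?mulr0.
rewrite -big_mkcond -big_filter.
set ch := [seq rcons w c | c <- iota 0 (nchildren d w)].
rewrite (_ : (if _ then _ else _) = \sum_(i <- if (size w < h)%N then ch else [::]) psi i);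
  last by case: ifP; rewrite ?big_map ?big_nil.
apply: perm_big; apply: uniq_perm.
- by rewrite filter_uniq ?uniq_verts.
- by case: ifP => // _; rewrite map_inj_uniq ?iota_uniq // => a b /rcons_inj[].
move=> i; rewrite mem_filter.
move: wV; rewrite !mem_verts => /andP[le_wh vw].
apply/andP/idP => [[/is_child_rcons ->]|].
  rewrite size_rcons is_vertex_rcons vw /= => /andP[-> lt_c].
  by apply: map_f; rewrite mem_iota.
case: ifP => // lt_wh /mapP[c]; rewrite mem_iota add0n => /andP[_ lt_c] ->.
by rewrite size_rcons is_vertex_rcons vw lt_c lt_wh is_child_rconsl eqxx.
Qed.

Lemma lapE psi w : w \in verts d h ->
  lap psi w = d%:Z * psi w
    - (if size w is 0 then 0 else psi (take (size w).-1 w))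
    - (if (size w < h)%N then \sum_(c <- iota 0 (nchildren d w)) psi (rcons w c) else 0).
Proof.
move=> wV; rewrite /lap -sum_parent // -sum_children //.
rewrite (eq_bigr (fun i => d%:Z * (psi i * (i == w)%:Z)
   - psi i * (is_child w i)%:Z - psi i * (is_child i w)%:Z)); last first.
  by move=> i _; rewrite DeltaE !mulrBr mulrCA.
by rewrite !big_split /= -mulr_sumr big_delta_seq ?uniq_verts // !sumrN.
Qed.

End Laplacian.

Local Close Scope ring_scope.

Definition subtree_size (d t : nat) : nat := \sum_(i < t) d.-1 ^ i.

Lemma subtree_size0 d : subtree_size d 0 = 0.
Proof. by rewrite /subtree_size big_ord0. Qed.

Lemma subtree_sizeS d t : subtree_size d t.+1 = 1 + d.-1 * subtree_size d t.
Proof.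
rewrite /subtree_size big_ord_recl expn0 big_distrr /=.
by congr (_ + _); apply: eq_bigr => i _; rewrite expnS.
Qed.

Lemma theta_subtree_size d t : 3 <= d -> theta d t = subtree_size d t.
Proof.
move=> d_ge3; have sub2_gt0 : 0 < d - 2 by rewrite subn_gt0.
suff E : (d - 2) * subtree_size d t = (d.-1 ^ t).-1 by rewrite /theta -E mulKn.
elim: t => [|t IH]; first by rewrite subtree_size0 muln0.
have : 0 < d.-1 ^ t by rewrite expn_gt0; apply/orP; left; lia.
rewrite subtree_sizeS expnS; move: IH.
set x := d.-1 ^ t; set y := subtree_size d t; nia.
Qed.

Lemma coprime_subtree_sizeS d t : coprime (subtree_size d t.+1) (subtree_size d t).
Proof.
by rewrite subtree_sizeS addnC -coprime_modl modnMDl coprime_modl coprime1n.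
Qed.

Local Open Scope ring_scope.

Lemma subtree_size_rec d t : (0 < d)%N ->
  d%:Z * (subtree_size d t.+1)%:Z - (d.-1)%:Z * (subtree_size d t)%:Z =
  (subtree_size d t.+2)%:Z.
Proof.
move=> d_gt0; rewrite (subtree_sizeS d t.+1) (subtree_sizeS d t) !PoszD !PoszM.
have -> : d%:Z = (d.-1)%:Z + 1 by rewrite -PoszD addn1 prednK.
ring.
Qed.

Section SubtreeWeight.
Variables (d h n : nat) (g : seq nat -> int).
Hypotheses (d_gt0 : (0 < d)%N) (n_gt0 : (0 < n)%N) (le_nh : (n <= h)%N).

Definition subtree_weight (w : seq nat) : int :=
  if (n <= size w)%N then g (take n w) * (subtree_size d (h.+1 - size w))%:Z
  else 0.

Lemma subtree_weight_parent w :
  (if size w is 0 then 0 else subtree_weight (take (size w).-1 w)) =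
  if (n < size w)%N then g (take n w) * (subtree_size d (h.+2 - size w))%:Z
  else 0.
Proof.
case/lastP: w => [//|u c].
rewrite size_rcons /= -cats1 take_size_cat // /subtree_weight ltnS.
by case: ifP => // le_nu; rewrite takel_cat.
Qed.

Lemma subtree_weight_children w : w \in verts d h ->
  (if (size w < h)%N then \sum_(c <- iota 0 (nchildren d w)) subtree_weight (rcons w c)
   else 0) =
  if (n <= size w)%N then (d.-1)%:Z * (g (take n w) * (subtree_size d (h - size w))%:Z)
  else if (size w).+1 == n then
    (subtree_size d (h.+1 - n))%:Z * \sum_(c <- iota 0 (nchildren d w)) g (rcons w c)
  else 0.
Proof.
rewrite mem_verts => /andP[le_wh _].
have [lt_wh|] := ltnP; last first.
  by move=> le_hw; rewrite (_ : size w = h) ?le_nh ?subnn ?subtree_size0 ?mulr0 //; lia.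
case: ifP => [le_nw|/negbT lt_wn].
  have -> : nchildren d w = d.-1 by case: w {le_wh lt_wh} le_nw; rewrite //= leqn0; lia.
  rewrite (eq_bigr (fun _ => g (take n w) * (subtree_size d (h - size w))%:Z)); last first.
    move=> c _; rewrite /subtree_weight size_rcons (leq_trans le_nw) //.
    by rewrite -cats1 takel_cat.
  by rewrite big_const_seq count_predT size_iota iter_addr_0 -mulr_natl natz.
case: ifP => [/eqP wn|/negbT wn].
  rewrite mulr_sumr; apply: eq_bigr => c _.
  by rewrite /subtree_weight size_rcons -wn leqnn take_oversize ?size_rcons // mulrC.
by rewrite big1 // => c _; rewrite /subtree_weight size_rcons ifN // -ltnNge ltn_neqAle wn ltnNge.
Qed.

Lemma lap_subtree_weight w : w \in verts d h ->
  lap d h subtree_weight w =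
  (if size w == n then g w * (subtree_size d (h.+2 - n))%:Z else 0)
  - (if size w == n.-1 then
       (subtree_size d (h.+1 - n))%:Z * \sum_(c <- iota 0 (nchildren d w)) g (rcons w c)
     else 0).
Proof.
move=> wV; rewrite lapE // subtree_weight_parent subtree_weight_children //.
have le_wh : (size w <= h)%N by move: wV; rewrite mem_verts => /andP[].
rewrite /subtree_weight; case: (ltngtP n (size w)) => [lt_nw|lt_wn|eq_nw].
- rewrite !ifN; try lia.
  rewrite (_ : (h.+1 - size w = (h - size w).+1)%N); last by lia.
  rewrite (_ : (h.+2 - size w = (h - size w).+2)%N); last by lia.
  rewrite -(subtree_size_rec _ d_gt0); ring.
- rewrite (_ : (size w == n.-1) = ((size w).+1 == n)); last by lia.
  by rewrite mulr0 !subr0 sub0r.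
- rewrite eq_nw take_size ifN; last by lia.
  rewrite (_ : (h.+1 - size w = (h - size w).+1)%N); last by lia.
  rewrite (_ : (h.+2 - size w = (h - size w).+2)%N); last by lia.
  rewrite -(subtree_size_rec _ d_gt0); ring.
Qed.

Lemma dvdz_lap_subtree_weight :
  {in verts d h, forall i, size i = n.-1 ->
    \sum_(c <- iota 0 (nchildren d i)) g (rcons i c) = 0} ->
  {in verts d h, forall i,
    ((subtree_size d (h.+2 - n))%:Z %| lap d h subtree_weight i)%Z}.
Proof.
move=> balanced i iV; rewrite lap_subtree_weight //.
have [si|_] := eqVneq (size i) n.-1; last first.
  by rewrite subr0; case: ifP; rewrite ?dvdz_mull.
by rewrite balanced // mulr0 subr0 (_ : size i == n = false) //; lia.
Qed.

End SubtreeWeight.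

Lemma inLm_lap d h m v psi :
  {in verts d h, forall w, (m < size w)%N -> v w = lap d h psi w} -> inLm d h m v.
Proof.
move=> vE; exists psi, (fun i => v i - lap d h psi i) => w wV.
rewrite -/(lap d h psi w) big_mkcond /= (eq_bigr (fun i =>
  (if (depth i <= m)%N then v i - lap d h psi i else 0) * (i == w)%:Z)); last first.
  by move=> i _; case: ifP; rewrite ?mul0r.
rewrite big_delta_seq ?uniq_verts //.
by case: leqP => [_|/vE ->//]; rewrite ?addr0 // addrC subrK.
Qed.

Lemma inLm_dvd_pairing d h m v psi (N : int) : inLm d h m v ->
  {in verts d h, forall w, (size w <= m)%N -> psi w = 0} ->
  {in verts d h, forall i, (N %| lap d h psi i)%Z} ->
  (N %| \sum_(w <- verts d h) psi w * v w)%Z.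
Proof.
case=> c [e vE] psi0 N_lap.
rewrite (eq_big_seq (fun w => \sum_(i <- verts d h) c i * (psi w * Delta d w i))); last first.
  move=> w wV; rewrite vE // mulrDr !mulr_sumr [X in _ + X]big1_seq ?addr0.
    by apply: eq_bigr => i _; rewrite Delta_sym mulrCA.
  move=> i /andP[le_im iV]; have [<-|] := eqVneq i w; last by rewrite !mulr0.
  by rewrite psi0 ?mul0r.
rewrite exchange_big big_seq; apply: rpred_sum => i iV.
by rewrite -mulr_sumr dvdz_mull ?N_lap.
Qed.

Lemma inLm_xscaled_subtree_size d h n j : (0 < d)%N -> (0 < n <= h)%N -> size j = n ->
  inLm d h n.-1 (xscaled (subtree_size d (h.+2 - n)) j).
Proof.
move=> d_gt0 /andP[n_gt0 le_nh] sj.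
apply: (@inLm_lap _ _ _ _ (subtree_weight d h n (fun u => (u == j)%:Z))).
move=> w wV lt_nw; rewrite lap_subtree_weight //.
rewrite (_ : size w == n.-1 = false) ?subr0; last by rewrite gtn_eqF.
rewrite /xscaled; have [->|ne_wj] := eqVneq w j; first by rewrite sj eqxx mulrC.
by rewrite mulr0; case: ifP; rewrite ?mul0r.
Qed.

Lemma inLm_xscaled_dvd d h n j k : (2 < d)%N -> (0 < n <= h)%N ->
  j \in verts d h -> size j = n -> inLm d h n.-1 (xscaled k j) ->
  (subtree_size d (h.+2 - n) %| k)%N.
Proof.
move=> d_gt2 /andP[n_gt0 le_nh]; have d_gt0 : (0 < d)%N by lia.
case/lastP: j => [_ /= n0|pj l]; first by lia.
move=> jV; rewrite size_rcons => spj kxj.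
have /andP[_ lt_l] : is_vertex d pj && (l < nchildren d pj)%N.
  by move: jV; rewrite mem_verts is_vertex_rcons => /andP[].
pose l' := if l == 0%N then 1%N else 0%N.
have ne_ll' : l != l' by rewrite /l'; case: (l).
pose g u := (nth 0%N u n.-1 == l)%:Z - (nth 0%N u n.-1 == l')%:Z.
pose psi := subtree_weight d h n g.
have psi0 : {in verts d h, forall w, (size w <= n.-1)%N -> psi w = 0}.
  by move=> w _ le_wn; rewrite /psi /subtree_weight ifN //; lia.
have balanced : {in verts d h, forall i, size i = n.-1 ->
    \sum_(c <- iota 0 (nchildren d i)) g (rcons i c) = 0}.
  move=> i _ si.
  have lt1_ch : (1 < nchildren d i)%N by rewrite /nchildren; case: (i) => *; lia.
  have lt_l'_ch : (l' < nchildren d i)%N.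
    by apply: leq_ltn_trans lt1_ch; rewrite /l'; case: ifP.
  have lt_l_ch : (l < nchildren d i)%N by rewrite (@eq_nchildren _ _ pj) // si -spj.
  rewrite (eq_bigr (fun c => 1 * (c == l)%:Z - 1 * (c == l')%:Z)); last first.
    by move=> c _; rewrite /g nth_rcons si ltnn eqxx !mul1r.
  by rewrite sumrB !big_delta_seq ?iota_uniq ?mem_iota ?subrr.
have pairing : \sum_(w <- verts d h) psi w * xscaled k (rcons pj l) w =
    k%:Z * (subtree_size d (h.+1 - n))%:Z.
  rewrite (eq_bigr (fun w => (k%:Z * psi w) * (w == rcons pj l)%:Z)); last first.
    by move=> w _; rewrite /xscaled mulrCA mulrA.
  rewrite big_delta_seq ?uniq_verts // /psi /subtree_weight size_rcons spj leqnn.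
  rewrite take_oversize ?size_rcons ?spj // /g nth_rcons -spj ltnn eqxx.
  by rewrite eqxx (negbTE ne_ll') subr0 mul1r.
have := inLm_dvd_pairing kxj psi0 (dvdz_lap_subtree_weight d_gt0 n_gt0 le_nh balanced).
rewrite pairing -PoszM dvdzE /= Gauss_dvdl //.
by rewrite (_ : (h.+2 - n = (h.+1 - n).+1)%N) ?coprime_subtree_sizeS //; lia.
Qed.

Theorem proposition8p10 (d h n : nat) (j : seq nat) :
  (3 <= d)%N -> (1 <= h)%N -> (1 <= n <= h)%N ->
  j \in verts d h -> depth j = n ->
  quot_order d h n j (theta d (h + 2 - n)).
Proof.
move=> d_ge3 _ n_range jV sj.
rewrite theta_subtree_size // addn2.
split; [|split].
- by rewrite subSn ?subtree_sizeS //; lia.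
- by apply: inLm_xscaled_subtree_size => //; lia.
move=> k /andP[k_gt0 lt_k] /(inLm_xscaled_dvd d_ge3 n_range jV sj).
by move/(dvdn_leq k_gt0); rewrite leqNgt lt_k.
Qed.
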